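(* Let $\tau$ be a traversal sequence, and let $\mathbf{w}=\langle w^1,\dots,w^n\rangle$ and $\tilde{\mathbf{w}}=\langle\tilde w^1,\dots,\tilde w^n\rangle$ be two sequences of tasks such that $\tilde w^i_s\le w^i_s$ for every $i\in\{1,\dots,n\}$ and every state $s$. Then the total work done by the fractional traversal algorithm with respect to $\tau$ and $\mathbf{w}$ is at least the total work done with respect to $\tau$ and $\tilde{\mathbf{w}}$.
   Context: A metrical task system has states $S=\{1,\dots,m\}$ and a symmetric non-negative matrix $(d_{st})$ with $d_{ss}=0$ satisfying the triangle inequality. A task is a vector $w\in\mathbb{R}_{\ge0}^m$. A traversal sequence is an infinite sequence $\tau=\tau_1,\tau_2,\dots$ of states. Write $\delta_{\ell,\ell'}=\sum_{j=\min(\ell,\ell')}^{\max(\ell,\ell')-1}d_{\tau_j\tau_{j+1}}$. Fractional traversal algorithm on $\tau$: it keeps a position $j$ (initially $t_0=1$) and the work $\rho$ done at the current position since arriving there (initially $0$). On a task $w$, with remaining fraction $f=1$, it repeats while $f>0$: $\lambda\gets\min\{(d_{\tau_j\tau_{j+1}}-\rho)/w_{\tau_j},\,f\}$ (interpreted as $f$ if $w_{\tau_j}=0$), $\rho\gets\rho+\lambda w_{\tau_j}$ (work $\lambda w_{\tau_j}$ is done in state $\tau_j$), $f\gets f-\lambda$, and if $\rho=d_{\tau_j\tau_{j+1}}$ then $j\gets j+1$, $\rho\gets0$. If $t_n$ is the position after processing $n$ tasks and $\rho_{t_n}$ the current value of $\rho$, the total work done is $\delta_{t_0,t_n}+\rho_{t_n}$.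 *)

From mathcomp Require Import ssreflect ssrbool eqtype ssrnat fintype.
From Stdlib Require Import Reals.

Local Open Scope R_scope.

Section FT.
Variable (m : nat) (d : 'I_m -> 'I_m -> R) (tau : nat -> 'I_m).

Fixpoint pathlen (l k : nat) : R :=
  match k with
  | O => 0
  | S k' => d (tau l) (tau (S l)) + pathlen (S l) k'
  end.

Definition delta (l l' : nat) : R :=
  pathlen (Nat.min l l') (Nat.max l l' - Nat.min l l').

(* One iteration of the inner while-loop body on a task w.
   Configuration: (position j, work rho at current position, remaining f). *)
Definition ft_step (w : 'I_m -> R) (c : nat * R * R) : nat * R * R :=
  let '(j, rho, f) := c in
  let s := tau j in
  let D := d s (tau (S j)) in
  let lam := if Req_EM_T (w s) 0 then f else Rmin ((D - rho) / w s) f in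
  let rho' := rho + lam * w s in
  let f' := f - lam in
  if Req_EM_T rho' D then (S j, 0, f') else (j, rho', f').

Definition ft_iter (w : 'I_m -> R) (k : nat) (j : nat) (rho : R) : nat * R * R :=
  Nat.iter k (ft_step w) (j, rho, 1).

Definition conf_f (c : nat * R * R) : R := let '(_, _, f) := c in f.

Definition ft_task (w : 'I_m -> R) (j : nat) (rho : R) (j' : nat) (rho' : R) : Prop :=
  exists k, (forall k', (k' < k)%nat -> conf_f (ft_iter w k' j rho) > 0) /\
            conf_f (ft_iter w k j rho) <= 0 /\
            (let '(j2, rho2, _) := ft_iter w k j rho in j2 = j' /\ rho2 = rho').

Inductive ft_run (ws : nat -> 'I_m -> R) : nat -> nat -> R -> Prop :=
  | ft_run0 : ft_run ws 0 1 0
  | ft_runS i j rho j' rho' :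
      ft_run ws i j rho -> ft_task (ws (S i)) j rho j' rho' ->
      ft_run ws (S i) j' rho'.

Definition total_work (j : nat) (rho : R) : R := delta 1 j + rho.

End FT.

From mathcomp Require Import ssreflect ssrfun ssrbool eqtype ssrnat fintype zify.
From Stdlib Require Import Reals Lra Psatz.
Local Open Scope R_scope.

(* A configuration (j, rho) of the algorithm is compared lexicographically,
   and the total work is monotone for this order.  Processing one task, the
   run with the lighter weights stays lexicographically behind: while it is
   at an earlier position it can at most reach the other run's position with
   no work done there, and at a common position each step of the lighter run
   does no more work while leaving no more of the task's fraction unspent. *)

Section Traversal.
Variables (m : nat) (d : 'I_m -> 'I_m -> R) (tau : nat -> 'I_m).
Hypothesis d_nonneg : forall s t, 0 <= d s t.

Definition edge (j : nat) : R := d (tau j) (tau j.+1).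

Lemma edge_ge0 j : 0 <= edge j.
Proof. exact: d_nonneg. Qed.

Definition conf_le (p q : nat * R) : Prop :=
  (p.1 < q.1)%nat \/ p.1 = q.1 /\ p.2 <= q.2.

Definition conf_valid (p : nat * R) : Prop := 0 <= p.2 <= edge p.1.

Lemma conf_le_refl p : conf_le p p.
Proof. by right; split; [|lra]. Qed.

Lemma conf_le_trans p q r : conf_le p q -> conf_le q r -> conf_le p r.
Proof.
rewrite /conf_le => [[Hpq|[Epq Hpq]] [Hqr|[Eqr Hqr]]];
  by [left; lia | right; split; [congruence | lra]].
Qed.

Definition ft_amount (W gap f : R) : R :=
  if Req_EM_T W 0 then f else Rmin (gap / W) f.

Definition settle (j : nat) (x : R) : nat * R :=
  if Req_EM_T x (edge j) then (j.+1, 0) else (j, x).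

Lemma ft_stepE w j r f :
  ft_step m d tau w (j, r, f) =
  let lam := ft_amount (w (tau j)) (edge j - r) f in
  (settle j (r + lam * w (tau j)), f - lam).
Proof. by rewrite /ft_step /settle /ft_amount /edge /=; case: ifP. Qed.

Lemma ft_amount_bounds W gap f : 0 <= W -> 0 <= gap -> 0 <= f ->
  0 <= ft_amount W gap f <= f /\ ft_amount W gap f * W <= gap.
Proof.
rewrite /ft_amount => HW Hgap Hf; case: Req_EM_T => [W0|HW0] /=; first by subst W; lra.
have HWpos : 0 < W by lra.
have Hq : gap / W * W = gap by field; lra.
have Hq0 : 0 <= gap / W by nra.
rewrite /Rmin; case: Rle_dec => ?; nra.
Qed.

Lemma ft_amount_mono Wt W rt r D ft f :
  0 <= Wt <= W -> rt <= r <= D -> 0 <= ft <= f ->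
  let lt := ft_amount Wt (D - rt) ft in let l := ft_amount W (D - r) f in
  rt + lt * Wt <= r + l * W /\ ft - lt <= f - l.
Proof.
move=> HW Hr Hf lt l.
have [Hl Hlgap] : 0 <= l <= f /\ l * W <= D - r by apply: ft_amount_bounds; lra.
rewrite /lt /l /ft_amount in Hl Hlgap *.
move: Hl Hlgap; case: (Req_EM_T W 0) => [W0|W0] /= Hl Hlgap.
  have Wt0 : Wt = 0 by lra.
  by subst; case: Req_EM_T => //= _; lra.
case: (Req_EM_T Wt 0) => [Wt0|Wt0] /=; first by subst; nra.
have HW' : 0 < W by lra.
have HWt : 0 < Wt by lra.
have Hq : (D - r) / W * W = D - r by field; lra.
have Hqt : (D - rt) / Wt * Wt = D - rt by field; lra.
(* the heavier task needs no more time to close its smaller gap *)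
have Hcmp : (D - r) / W <= (D - rt) / Wt.
{ set a := (D - r) / W in Hq *; set b := (D - rt) / Wt in Hqt *.
  have Ha : 0 <= a by nra.
  have : a * Wt <= b * Wt by nra.
  by move/(Rmult_le_reg_r _ _ _ HWt). }
rewrite /Rmin in Hl Hlgap *; do 2 case: Rle_dec => ? /=; nra.
Qed.

Lemma settle_valid j x : 0 <= x <= edge j -> conf_valid (settle j x).
Proof.
rewrite /settle /conf_valid => Hx; case: Req_EM_T => _ //=.
by split; [lra | apply: edge_ge0].
Qed.

Lemma settle_ge j r x : r <= x -> conf_le (j, r) (settle j x).
Proof.
rewrite /settle /conf_le => Hx; case: Req_EM_T => _ /=; first by left.
by right; split.
Qed.

Lemma settle_mono j xt x : xt <= x <= edge j ->
  conf_le (settle j xt) (settle j x).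
Proof.
rewrite /settle /conf_le => Hx.
case: (Req_EM_T x (edge j)) => Ex; case: Req_EM_T => Ext /=.
- by right; split; [|lra].
- by left.
- by case: Ex; lra.
- by right; split; [|lra].
Qed.

Lemma settle_below jt x j r : (jt < j)%nat -> 0 <= r ->
  conf_le (settle jt x) (j, r).
Proof.
rewrite /settle /conf_le => Hj Hr; case: Req_EM_T => _ /=; last by left.
by case: (ltnP jt.+1 j) => ?; [left | right; split; [lia | lra]].
Qed.

Lemma ft_step_progress w j r f : (forall s, 0 <= w s) ->
  conf_valid (j, r) -> 0 <= f ->
  let c := ft_step m d tau w (j, r, f) in
  conf_valid c.1 /\ conf_le (j, r) c.1 /\ c.2 <= f.
Proof.
move=> Hw Hr Hf c; rewrite /c /conf_valid ft_stepE /= in Hr *.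
set lam := ft_amount _ _ f.
have [Hl Hlgap] : 0 <= lam <= f /\ lam * w (tau j) <= edge j - r.
  by apply: ft_amount_bounds => //; lra.
have Hwork : 0 <= lam * w (tau j) by apply: Rmult_le_pos; [lra | apply: Hw].
split; [apply: settle_valid | split; [apply: settle_ge|]]; lra.
Qed.

Lemma ft_step_mono w wt j rt r ft f :
  0 <= wt (tau j) <= w (tau j) -> 0 <= rt <= r -> r <= edge j -> 0 <= ft <= f ->
  let ct := ft_step m d tau wt (j, rt, ft) in
  let c := ft_step m d tau w (j, r, f) in
  conf_le ct.1 c.1 /\ ct.2 <= c.2.
Proof.
move=> Hw Hr HrD Hf ct c; rewrite /ct /c !ft_stepE /=.
have [Hx Hf'] := ft_amount_mono (wt (tau j)) (w (tau j)) rt r (edge j) ft f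
                   Hw ltac:(lra) Hf.
have [Hl Hlgap] := ft_amount_bounds (w (tau j)) (edge j - r) f ltac:(lra)
                     ltac:(lra) ltac:(lra).
split=> //; apply: settle_mono; nra.
Qed.

Lemma ft_step_below w jt rt ft j r : (jt < j)%nat -> 0 <= r ->
  conf_le (ft_step m d tau w (jt, rt, ft)).1 (j, r).
Proof. by rewrite ft_stepE; apply: settle_below. Qed.

Inductive ft_loop (w : 'I_m -> R) : nat * R * R -> nat * R -> Prop :=
  | ft_loop_stop c : c.2 <= 0 -> ft_loop w c c.1
  | ft_loop_step c a : 0 < c.2 -> ft_loop w (ft_step m d tau w c) a ->
      ft_loop w c a.

Lemma ft_loop_next w c a : 0 < c.2 -> ft_loop w c a ->
  ft_loop w (ft_step m d tau w c) a.
Proof. by move=> Hc Hloop; case: Hloop Hc => [c' Hstop Hc | //]; lra. Qed.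

Lemma ft_loop_iter w k c :
  (forall k', (k' < k)%nat -> 0 < (Nat.iter k' (ft_step m d tau w) c).2) ->
  (Nat.iter k (ft_step m d tau w) c).2 <= 0 ->
  ft_loop w c (Nat.iter k (ft_step m d tau w) c).1.
Proof.
elim: k c => [|k IHk] c Hpos Hstop; first exact: ft_loop_stop.
apply: ft_loop_step; first exact: (Hpos 0%nat (ltn0Sn k)).
rewrite Nat.iter_succ_r in Hstop *; apply: IHk Hstop => k' Hk'.
by rewrite -Nat.iter_succ_r; apply: Hpos.
Qed.

Lemma ft_task_loop w j r j' r' :
  ft_task m d tau w j r j' r' -> ft_loop w (j, r, 1) (j', r').
Proof.
have conf_fE c : conf_f c = c.2 by case: c => [[]].
case=> k []; rewrite /ft_iter => Hpos [].
have := ft_loop_iter w k (j, r, 1).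
case: (Nat.iter k _ _) => [[j2 r2] f2] Hloop Hstop [<- <-].
by apply: Hloop; [move=> k' /Hpos; rewrite conf_fE | rewrite -conf_fE].
Qed.

Lemma ft_loop_valid w c a : (forall s, 0 <= w s) -> ft_loop w c a ->
  conf_valid c.1 -> conf_valid a /\ conf_le c.1 a.
Proof.
move=> Hw; elim=> {c a} [c _ Hc | [[j r] f] a Hf _ IH Hc] /=.
  by split=> //; apply: conf_le_refl.
have [Hv [Hle _]] := ft_step_progress w j r f Hw Hc (Rlt_le _ _ Hf).
have [Ha Hle'] := IH Hv.
by split=> //; apply: conf_le_trans Hle Hle'.
Qed.

(* The hypothesis [ct.2 <= c.2] on the remaining fractions is the invariant
   that makes the induction go through. *)
Lemma ft_loop_mono w wt (Hw : forall s, 0 <= w s) (Hwt : forall s, 0 <= wt s)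
  (Hle : forall s, wt s <= w s) ct at_ :
  ft_loop wt ct at_ -> forall c a, ft_loop w c a ->
  conf_valid ct.1 -> conf_valid c.1 -> ct.2 <= c.2 -> conf_le ct.1 c.1 ->
  conf_le at_ a.
Proof.
elim=> {ct at_} [ct _ | [[jt rt] ft] at_ Hft _ IH] c a Hloop Hvt Hv Hf Hconf.
  by apply: conf_le_trans Hconf (proj2 (ft_loop_valid _ _ _ Hw Hloop Hv)).
move: Hloop Hv Hf Hconf; case: c => [[j r] f] Hloop Hv /= Hf Hconf.
rewrite /= in Hft Hvt Hv.
have [Hvt' [_ Hft']] := ft_step_progress wt jt rt ft Hwt Hvt (Rlt_le _ _ Hft).
set ct' := ft_step m d tau wt (jt, rt, ft) in Hvt' Hft' IH *.
case: Hconf => [Hlt | [/= Ej Hr]].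
  by apply: IH Hloop Hvt' Hv _ (ft_step_below _ _ _ _ _ _ Hlt (proj1 Hv)) => /=; lra.
subst jt; have Hloop' := ft_loop_next w (j, r, f) a (Rlt_le_trans _ _ _ Hft Hf) Hloop.
have [Hconf' Hf''] := ft_step_mono w wt j rt r ft f
  (conj (Hwt _) (Hle _)) (conj (proj1 Hvt) Hr) (proj2 Hv) (conj (Rlt_le _ _ Hft) Hf).
have [Hv' _] := ft_step_progress w j r f Hw Hv ltac:(lra).
exact: IH Hloop' Hvt' Hv' Hf'' Hconf'.
Qed.

Lemma pathlenS l k : pathlen m d tau l k.+1 = edge l + pathlen m d tau l.+1 k.
Proof. by []. Qed.

Lemma pathlen_snoc l k :
  pathlen m d tau l k.+1 = pathlen m d tau l k + edge (l + k).
Proof.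
elim: k l => [|k IHk] l; first by rewrite pathlenS addn0 /=; lra.
by rewrite pathlenS IHk pathlenS addSnnS; lra.
Qed.

Lemma pathlen_le l k k' : (k <= k')%nat ->
  pathlen m d tau l k <= pathlen m d tau l k'.
Proof.
move=> /subnK <-; elim: (k' - k)%nat => [|i IHi]; first by rewrite add0n; lra.
by rewrite addSn pathlen_snoc; have := edge_ge0 (l + (i + k)); lra.
Qed.

Lemma total_workE j r : (0 < j)%nat ->
  total_work m d tau j r = pathlen m d tau 1 j.-1 + r.
Proof.
move=> Hj; rewrite /total_work /delta Nat.min_l ?Nat.max_r ?subn1 //; lia.
Qed.

Lemma total_work_mono jt rt j r : (0 < jt)%nat -> conf_valid (jt, rt) -> 0 <= r ->
  conf_le (jt, rt) (j, r) -> total_work m d tau jt rt <= total_work m d tau j r.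
Proof.
rewrite /conf_valid /= => Hjt Hvt Hr [/= Hlt | [/= <- Hle]];
  last by rewrite !total_workE //; lra.
have Hj : (0 < j)%nat by lia.
have Hsnoc : pathlen m d tau 1 jt = pathlen m d tau 1 jt.-1 + edge jt.
  by rewrite -{1}(prednK Hjt) pathlen_snoc add1n prednK.
have := pathlen_le 1 jt j.-1 ltac:(lia).
rewrite !total_workE //; lra.
Qed.

Lemma ft_run_valid n ws (Hws : forall i s, (1 <= i <= n)%nat -> 0 <= ws i s)
  i j r : ft_run m d tau ws i j r -> (i <= n)%nat ->
  conf_valid (j, r) /\ (0 < j)%nat.
Proof.
elim=> {i j r} [|i j r j' r' _ IH Htask] Hi.
  by split=> //; rewrite /conf_valid /=; split; [lra | apply: edge_ge0].
have [Hv Hj] := IH ltac:(lia).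
have Hw s : 0 <= ws i.+1 s by apply: Hws; lia.
have [Hv' Hle] := ft_loop_valid _ _ _ Hw (ft_task_loop _ _ _ _ _ Htask) Hv.
by split=> //; case: Hle => /= [|[]]; lia.
Qed.

Lemma ft_run_mono n w wt
  (w_nonneg : forall i s, (1 <= i <= n)%nat -> 0 <= w i s)
  (wt_nonneg : forall i s, (1 <= i <= n)%nat -> 0 <= wt i s)
  (wt_le_w : forall i s, (1 <= i <= n)%nat -> wt i s <= w i s)
  i j r : ft_run m d tau w i j r -> (i <= n)%nat ->
  forall jt rt, ft_run m d tau wt i jt rt -> conf_le (jt, rt) (j, r).
Proof.
elim=> {i j r} [|i j r j' r' Hrun IH Htask] Hi jt rt Hrunt.
  by inversion Hrunt; apply: conf_le_refl.
inversion Hrunt as [|i' jt0 rt0 ? ? Hrunt0 Htaskt]; subst.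
have Hi' : (1 <= i.+1 <= n)%nat by lia.
have [Hv _] := ft_run_valid n w w_nonneg i j r Hrun ltac:(lia).
have [Hvt _] := ft_run_valid n wt wt_nonneg i jt0 rt0 Hrunt0 ltac:(lia).
apply: (ft_loop_mono _ _ (w_nonneg _ ^~ Hi') (wt_nonneg _ ^~ Hi')
          (wt_le_w _ ^~ Hi') _ _ (ft_task_loop _ _ _ _ _ Htaskt) _ _
          (ft_task_loop _ _ _ _ _ Htask)) => //=; first lra.
exact: IH (ltnW Hi) _ _ Hrunt0.
Qed.

End Traversal.

Theorem lemma1 (m : nat) (d : 'I_m -> 'I_m -> R)
  (d_refl : forall s, d s s = 0)
  (d_nonneg : forall s t, 0 <= d s t)
  (d_sym : forall s t, d s t = d t s)
  (d_tri : forall s t u, d s u <= d s t + d t u)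
  (tau : nat -> 'I_m) (n : nat) (w wt : nat -> 'I_m -> R)
  (w_nonneg : forall i s, (1 <= i <= n)%nat -> 0 <= w i s)
  (wt_nonneg : forall i s, (1 <= i <= n)%nat -> 0 <= wt i s)
  (wt_le_w : forall i s, (1 <= i <= n)%nat -> wt i s <= w i s)
  (j : nat) (rho : R) (jt : nat) (rhot : R)
  (Hrun : @ft_run m d tau w n j rho)
  (Hrunt : @ft_run m d tau wt n jt rhot) :
  @total_work m d tau jt rhot <= @total_work m d tau j rho.
Proof.
have run_valid := ft_run_valid m d tau d_nonneg n.
have [[Hrho _] _] := run_valid w w_nonneg n j rho Hrun (leqnn n).
have [Hvt Hjt] := run_valid wt wt_nonneg n jt rhot Hrunt (leqnn n).
apply: (total_work_mono m d tau d_nonneg) Hjt Hvt Hrho _.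
exact: (ft_run_mono m d tau d_nonneg n w wt w_nonneg wt_nonneg wt_le_w n j rho Hrun
          (leqnn n) jt rhot Hrunt).
Qed.
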